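(* With $TS$, $\Delta$ and $P'_w$ as below, if a configuration $s\in S$ is reachable in the reconfigurable broadcast network $RBN(TS)$ (i.e. there exist $\theta_0\in\Theta_0$, $\theta$ with $\theta_0\xrightarrow{*}\theta$ in $RBN(TS)$ and a vertex $v$ of $\theta$ with $L_\theta(v)=s$), then $s$ is reachable in $TS(P'_w)$.
   Context: Fix a finite alphabet $\Sigma$; let $\Sigma_b=\{!!a:a\in\Sigma\}$ and $\Sigma_r=\{??a:a\in\Sigma\}$. A labelled WSTS is a tuple $(S,\Lambda,S_0,R,\le)$ with $S$ a set of configurations, $\Lambda$ a finite alphabet, $S_0\subseteq S$ initial, $R\subseteq S\times\Lambda\times S$, and $\le$ a well-quasi-order on $S$ compatible with $R$: if $s_1\le t_1$ and $(s_1,a,s_2)\in R$ then there is $t_2$ with $(t_1,a,t_2)\in R$ and $s_2\le t_2$. A process is a labelled WSTS with $\Lambda=\Sigma_b\cup\Sigma_r$, given by a finite set $\Delta$ of labelled rules, each rule inducing transitions of $R$ with its label, $R$ being the union of these. For $\Delta'\subseteq\Delta$, $TS(\Delta')$ is the system with the same $S,S_0,\le$ but only transitions induced by rules in $\Delta'$ (assumed a labelled WSTS). For a rule $t$, $c_t$ is the finite set of $\le$-minimal configurations at which $t$ is enabled. $B_a$ (resp. $R_a$) is the set of rules labelled $!!a$ (resp. $??a$), $Rec=\bigcup_aR_a$. A configuration $c$ is coverable if some reachable $c'$ has $c'\ge c$. $P'_0=\Delta\setminus Rec$; for $i\ge1$, $AddT_i$ is the union of $R_a$ over letters $a$ not handled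 in earlier rounds such that some $t\in B_a$ has an element of $c_t$ coverable in $TS(P'_{i-1})$, and $P'_i=P'_{i-1}\cup AddT_i$; $P'_w$ is the final set, reached when no further rules are added. An $S$-graph is a finite undirected graph $(V,E,L)$ without self-loops with $L:V\to S$; $\Theta$ is the set of all such, $\Theta_0$ those with all labels in $S_0$. Broadcast step: $(V,E,L)\xrightarrow{a}(V,E,L')$ if some $v$ has $(L(v),!!a,L'(v))\in R$, every neighbour $u$ of $v$ has $(L(u),??a,L'(u))\in R$, and all other labels unchanged. Reconfiguration step: $(V,E,L)\to(V,E',L)$ for any edge set $E'$ on $V$ without self-loops. $RBN(TS)$ is the transition system on $\Theta$ with initial set $\Theta_0$ and both kinds of steps. *)

From mathcomp Require Import all_boot.
From Stdlib Require Import Relations.Relation_Operators.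
Set Implicit Arguments.
Unset Strict Implicit.
Unset Printing Implicit Defensive.

Inductive act (Sig : Type) : Type :=
| Bcast (a : Sig)
| Recv (a : Sig).

Section Defs.
Variables (Sig Rule : finType) (S : Type).
Variables (le : S -> S -> Prop) (S0 : S -> Prop).
Variables (lab : Rule -> act Sig) (rstep : Rule -> S -> S -> Prop).

Definition wqo : Prop :=
  (forall x, le x x) /\ (forall x y z, le x y -> le y z -> le x z) /\
  (forall f : nat -> S, exists i j, i < j /\ le (f i) (f j)).

Definition trans (D : Rule -> Prop) (s : S) (l : act Sig) (s' : S) : Prop :=
  exists t, D t /\ lab t = l /\ rstep t s s'.

Definition compatible (D : Rule -> Prop) : Prop :=
  forall s1 t1 l s2, le s1 t1 -> trans D s1 l s2 ->
    exists t2, trans D t1 l t2 /\ le s2 t2.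

Definition reachableTS (D : Rule -> Prop) (s : S) : Prop :=
  exists s0, S0 s0 /\
    clos_refl_trans S (fun x y => exists l, trans D x l y) s0 s.

Definition coverableTS (D : Rule -> Prop) (c : S) : Prop :=
  exists c', reachableTS D c' /\ le c c'.

Definition enabled (t : Rule) (s : S) : Prop := exists s', rstep t s s'.

Definition in_ct (t : Rule) (c : S) : Prop :=
  enabled t c /\ forall c', enabled t c' -> le c' c -> le c c'.

Definition is_recv (t : Rule) : Prop := exists a, lab t = Recv a.

Definition letter_cond (P : Rule -> Prop) (a : Sig) : Prop :=
  exists t, lab t = Bcast a /\ exists c, in_ct t c /\ coverableTS P c.

(* (P'_i, letters handled in rounds 1..i) *)
Fixpoint Pstate (i : nat) : (Rule -> Prop) * (Sig -> Prop) :=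
  match i with
  | 0 => (fun t => ~ is_recv t, fun _ => False)
  | i'.+1 =>
      let (P, H) := Pstate i' in
      let newl := fun a => ~ H a /\ letter_cond P a in
      (fun t => P t \/ exists a, newl a /\ lab t = Recv a,
       fun a => H a \/ newl a)
  end.

Definition Pprime (i : nat) : Rule -> Prop := fst (Pstate i).

(* P'_w : the final set = the limit of the increasing chain P'_0 ⊆ P'_1 ⊆ ...
   (which stabilises since the rule set is finite) *)
Definition Pw : Rule -> Prop := fun t => exists i, Pprime i t.

Record sgraph (n : nat) := SGraph { gE : 'I_n -> 'I_n -> Prop; gL : 'I_n -> S }.

Definition wf_edges n (E : 'I_n -> 'I_n -> Prop) : Prop :=
  (forall u v, E u v -> E v u) /\ (forall v, ~ E v v).

Definition initial n (g : sgraph n) : Prop :=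
  wf_edges (gE g) /\ forall v, S0 (gL g v).

Definition bcast_step n (g g' : sgraph n) : Prop :=
  gE g' = gE g /\
  exists (a : Sig) (v : 'I_n),
    (exists t, lab t = Bcast a /\ rstep t (gL g v) (gL g' v)) /\
    (forall u, gE g v u -> exists t, lab t = Recv a /\ rstep t (gL g u) (gL g' u)) /\
    (forall u, u <> v -> ~ gE g v u -> gL g' u = gL g u).

Definition reconf_step n (g g' : sgraph n) : Prop :=
  wf_edges (gE g') /\ gL g' = gL g.

Definition rbn_step n (g g' : sgraph n) : Prop := bcast_step g g' \/ reconf_step g g'.

Definition reachableRBN (s : S) : Prop :=
  exists n (g0 g : sgraph n), initial g0 /\
    clos_refl_trans (sgraph n) (@rbn_step n) g0 g /\ exists v, gL g v = s.

End Defs.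

From Stdlib Require Import Relations.Relation_Operators Classical ClassicalEpsilon.
From mathcomp Require Import all_boot.

Set Implicit Arguments.
Unset Strict Implicit.
Unset Printing Implicit Defensive.

(* Every label ever produced in RBN(TS) is reachable in TS(P'_w), by induction on
   the run.  A broadcasting vertex uses a rule of P'_0 from a configuration x that
   is reachable in TS(P'_N) for some finite round N.  Since the quasi-order is
   well-founded, x lies above a minimal configuration c at which the broadcast
   rule is enabled, and c is covered by x itself; so the broadcast letter
   qualifies at round N + 1 and every receiving rule for it belongs to P'_w. *)

Lemma clos_refl_trans_mono (A : Type) (R1 R2 : A -> A -> Prop) :
  (forall x y, R1 x y -> R2 x y) ->
  forall x y, clos_refl_trans A R1 x y -> clos_refl_trans A R2 x y.
Proof.
move=> R12 x y; elim=> [{}x {}y /R12|{}x|{}x {}y z _ IHxy _ IHyz].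
- exact: rt_step.
- exact: rt_refl.
- exact: rt_trans IHxy IHyz.
Qed.

Section WellQuasiOrder.
Variables (S : Type) (le : S -> S -> Prop).
Hypothesis wqo_le : wqo le.

Definition strict_le (y x : S) : Prop := le y x /\ ~ le x y.

Lemma wqo_strict_wf : well_founded strict_le.
Proof.
case: wqo_le => le_refl [le_trans le_good] x; apply: NNPP => nacc_x.
have down y : ~ Acc strict_le y -> exists z, ~ Acc strict_le z /\ strict_le z y.
  move=> nacc_y; apply: NNPP => no_z; apply: nacc_y; constructor=> z lt_zy.
  by apply: NNPP => nacc_z; apply: no_z; exists z.
pose next y := epsilon (inhabits x) (fun z => ~ Acc strict_le z /\ strict_le z y).
pose f n := iter n next x.
have f_desc n : ~ Acc strict_le (f n) /\ strict_le (f n.+1) (f n).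
  have f_nacc m : ~ Acc strict_le (f m).
    by elim: m => // m IHm; exact: (epsilon_spec _ _ (down _ IHm)).1.
  exact: conj (f_nacc n) (epsilon_spec _ _ (down _ (f_nacc n))).2.
have f_le i j : i < j -> le (f j) (f i.+1).
  elim: j => // j IHj; rewrite ltnS leq_eqVlt => /orP[/eqP <-|lt_ij]; first exact: le_refl.
  exact: le_trans (f_desc j).2.1 (IHj lt_ij).
have [i [j [lt_ij le_ij]]] := le_good f.
exact: (f_desc i).2.2 (le_trans _ _ _ le_ij (f_le i j lt_ij)).
Qed.

Lemma wqo_minimal_below (P : S -> Prop) x : P x ->
  exists c, [/\ P c, le c x & forall c', P c' -> le c' c -> le c c'].
Proof.
case: wqo_le => le_refl [le_trans _].
elim/(well_founded_ind wqo_strict_wf): x => x IHx Px.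
case: (classic (exists c', P c' /\ strict_le c' x)) => [[c' [Pc' lt_c'x]]|no_below].
  have [c [Pc le_cc' c_min]] := IHx c' lt_c'x Pc'.
  by exists c; split=> //; exact: le_trans le_cc' lt_c'x.1.
exists x; split=> // c' Pc' le_c'x; apply: NNPP => not_le_xc'.
by apply: no_below; exists c'.
Qed.

End WellQuasiOrder.

Section TransitionSystems.
Variables (Sig Rule : finType) (S : Type).
Variables (le : S -> S -> Prop) (S0 : S -> Prop).
Variables (lab : Rule -> act Sig) (rstep : Rule -> S -> S -> Prop).

Notation reachable := (reachableTS S0 lab rstep).

Lemma reachableTS_step (D : Rule -> Prop) t x y :
  reachable D x -> D t -> rstep t x y -> reachable D y.
Proof.
move=> [s0 [init_s0 run]] Dt xy; exists s0; split=> //.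
by apply: rt_trans run (rt_step _ _ _ _ _); exists (lab t), t.
Qed.

(* A run uses finitely many rules, hence stays inside one set of the chain. *)
Lemma reachableTS_chain (D : nat -> Rule -> Prop) s :
  (forall i j t, i <= j -> D i t -> D j t) ->
  reachable (fun t => exists i, D i t) s -> exists N, reachable (D N) s.
Proof.
move=> D_mono [s0 [init_s0 run]].
suff [N runN] : exists N,
    clos_refl_trans S (fun x y => exists l, trans lab rstep (D N) x l y) s0 s.
  by exists N, s0.
elim: run => [x y [l [t [[i Dit] lab_step]]]|x|x y z _ [N1 run1] _ [N2 run2]].
- by exists i; apply: rt_step; exists l, t.
- by exists 0; exact: rt_refl.
- have widen N : N <= maxn N1 N2 -> forall x y,
      (exists l, trans lab rstep (D N) x l y) ->
      exists l, trans lab rstep (D (maxn N1 N2)) x l y.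
    move=> le_N x' y' [l [t [DNt lab_step]]].
    by exists l, t; split; first exact: D_mono le_N DNt.
  exists (maxn N1 N2); apply: rt_trans.
  + exact: clos_refl_trans_mono (widen _ (leq_maxl _ _)) _ _ run1.
  + exact: clos_refl_trans_mono (widen _ (leq_maxr _ _)) _ _ run2.
Qed.

Lemma exists_in_ct_below t x : wqo le -> enabled rstep t x ->
  exists c, in_ct le rstep t c /\ le c x.
Proof.
move=> wqo_le en_x.
by have [c [en_c le_cx c_min]] := wqo_minimal_below wqo_le en_x; exists c.
Qed.

End TransitionSystems.

Section Rounds.
Variables (Sig Rule : finType) (S : Type).
Variables (le : S -> S -> Prop) (S0 : S -> Prop).
Variables (lab : Rule -> act Sig) (rstep : Rule -> S -> S -> Prop).

Notation P' := (Pprime le S0 lab rstep).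
Notation handled i := (snd (Pstate le S0 lab rstep i)).
Notation Pw := (Pw le S0 lab rstep).
Notation reachable := (reachableTS S0 lab rstep).

Lemma Pprime_succ i t : P' i t -> P' i.+1 t.
Proof. by rewrite /Pprime /=; case: (Pstate _ _ _ _ i) => P H /=; left. Qed.

Lemma Pprime_mono i j t : i <= j -> P' i t -> P' j t.
Proof. by move=> /subnK <-; elim: (j - i) => //= k IHk /IHk /Pprime_succ. Qed.

Lemma Pprime_handled_recv i a t : handled i a -> lab t = Recv a -> P' i t.
Proof.
elim: i => [|i IHi] //; rewrite /Pprime /= in IHi *.
case: (Pstate _ _ _ _ i) IHi => P H /= IHi [/IHi Pt|new_a] lab_t.
- by left; exact: Pt lab_t.
- by right; exists a.
Qed.

Lemma Pprime_qualified_recv i a t :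
  letter_cond le S0 lab rstep (P' i) a -> lab t = Recv a -> P' i.+1 t.
Proof.
move=> qual_a lab_t; case: (classic (handled i a)) => [/Pprime_handled_recv|].
  by move=> /(_ t lab_t); exact: Pprime_succ.
move: qual_a; rewrite /Pprime /=.
by case: (Pstate _ _ _ _ i) => P H /= qual_a new_a; right; exists a.
Qed.

Lemma Pw_bcast t a : lab t = Bcast a -> Pw t.
Proof. by move=> lab_t; exists 0 => -[b]; rewrite lab_t. Qed.

Lemma Pw_recv_of_bcast t t' a x : wqo le ->
  reachable Pw x -> lab t = Bcast a -> enabled rstep t x -> lab t' = Recv a -> Pw t'.
Proof.
move=> wqo_le reach_x lab_t en_x lab_t'.
have [N reach_xN] := reachableTS_chain (fun i j t => @Pprime_mono i j t) reach_x.
have [c [ct_c le_cx]] := exists_in_ct_below wqo_le en_x.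
have qual_a : letter_cond le S0 lab rstep (P' N) a.
  by exists t; split=> //; exists c; split=> //; exists x.
by exists N.+1; exact: Pprime_qualified_recv qual_a lab_t'.
Qed.

End Rounds.

Section Networks.
Variables (Sig Rule : finType) (S : Type).
Variables (le : S -> S -> Prop) (S0 : S -> Prop).
Variables (lab : Rule -> act Sig) (rstep : Rule -> S -> S -> Prop).
Hypothesis wqo_le : wqo le.

Notation reachable := (reachableTS S0 lab rstep (Pw le S0 lab rstep)).

Lemma rbn_step_reachable_labels n (g g' : sgraph S n) :
  rbn_step lab rstep g g' ->
  (forall v, reachable (gL g v)) -> forall v, reachable (gL g' v).
Proof.
move=> [[_ [a [w [[t [lab_t w_step]] [nbr_step others]]]]]|[_ ->]] reach u //.
case: (classic (u = w)) => [->|u_ne_w].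
  by apply: reachableTS_step (reach w) _ w_step; exact: Pw_bcast lab_t.
case: (classic (gE g w u)) => [/nbr_step[t' [lab_t' u_step]]|not_nbr].
  apply: reachableTS_step (reach u) _ u_step.
  exact: Pw_recv_of_bcast wqo_le (reach w) lab_t (ex_intro _ _ w_step) lab_t'.
by rewrite others.
Qed.

Lemma rbn_run_reachable_labels n (g g' : sgraph S n) :
  clos_refl_trans (sgraph S n) (@rbn_step _ _ _ lab rstep n) g g' ->
  (forall v, reachable (gL g v)) -> forall v, reachable (gL g' v).
Proof.
elim=> [{}g {}g' /rbn_step_reachable_labels //|//|g1 g2 g3 _ IH12 _ IH23].
by move=> /IH12 /IH23.
Qed.

End Networks.

Theorem lemma11 (Sig Rule : finType) (S : Type)
  (le : S -> S -> Prop) (S0 : S -> Prop)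
  (lab : Rule -> act Sig) (rstep : Rule -> S -> S -> Prop)
  (Hwqo : wqo le)
  (Hcompat : forall D : Rule -> Prop, compatible le lab rstep D)
  (s : S) :
  reachableRBN S0 lab rstep s -> reachableTS S0 lab rstep (Pw le S0 lab rstep) s.
Proof.
move=> [n [g0 [g [[_ init_g0] [run [v <-]]]]]].
apply: (rbn_run_reachable_labels Hwqo run) => u.
by exists (gL g0 u); split=> //; exact: rt_refl.
Qed.
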